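(* Let $X$ be a locally compact Hausdorff space. Then $(\Gamma(X),\tau_{hco})$ is a regular space.
   Context: $\Gamma(X)$ denotes the set of all homeomorphisms $f:\mathrm{dom}(f)\to\mathrm{im}(f)$ between open subsets of $X$ (including the empty function), an inverse semigroup under partial composition. For compact $K\subseteq X$ and open $V\subseteq X$ put $\langle K,V\rangle=\{f\in\Gamma(X): K\subseteq\mathrm{dom}(f),\ f(K)\subseteq V\}$ and $\langle K,V\rangle^{-1}=\{f\in\Gamma(X): K\subseteq\mathrm{im}(f),\ f^{-1}(K)\subseteq V\}$. $CL(X)$ is the set of closed subsets of $X$ (including $\emptyset$) with the Fell topology, generated by the subbasic sets $(X\setminus K)^+=\{A\in CL(X): A\subseteq X\setminus K\}$ ($K$ compact) and $V^-=\{A\in CL(X): A\cap V\neq\emptyset\}$ ($V$ nonempty open). Define $D,I:\Gamma(X)\to CL(X)$ by $D(f)=X\setminus\mathrm{dom}(f)$, $I(f)=X\setminus\mathrm{im}(f)$. The topology $\tau_{hco}$ on $\Gamma(X)$ is generated by all sets $\langle K,V\rangle$, $\langle K,V\rangle^{-1}$, $D^{-1}(W)$ and $I^{-1}(W)$, where $K$ is compact, $V$ open in $X$ and $W$ is Fell-open in $CL(X)$. *)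

From HB Require Import structures.
From mathcomp Require Import all_boot all_classical all_reals all_analysis.

Set Implicit Arguments.
Unset Strict Implicit.
Unset Printing Implicit Defensive.

Local Open Scope classical_set_scope.

Section PartialHomeo.
Variable X : topologicalType.

(* A partial map X -> X is represented canonically as X -> option X
   (None = undefined), so that equal partial functions are equal. *)
Definition pdom (f : X -> option X) : set X := [set x | exists y, f x = Some y].
Definition pim (f : X -> option X) : set X := [set y | exists x, f x = Some y].

Definition is_partial_homeo (f : X -> option X) : Prop :=
  [/\ open (pdom f), open (pim f),
      (forall x1 x2 y, f x1 = Some y -> f x2 = Some y -> x1 = x2),
      {within pdom f, continuous (fun x => odflt x (f x))} &
      exists g : X -> X, (forall x y, f x = Some y -> g y = x) /\
                         {within pim f, continuous g}].

Definition Gamma : Type := {f : X -> option X | is_partial_homeo f}.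
HB.instance Definition _ := gen_eqMixin Gamma.
HB.instance Definition _ := gen_choiceMixin Gamma.

Definition gdom (f : Gamma) : set X := pdom (proj1_sig f).
Definition gim (f : Gamma) : set X := pim (proj1_sig f).

Definition CL : Type := {A : set X | closed A}.
HB.instance Definition _ := gen_eqMixin CL.
HB.instance Definition _ := gen_choiceMixin CL.

Definition fell_subbase : set (set CL) :=
  [set S | (exists K : set X, compact K /\
              S = [set A : CL | proj1_sig A `<=` ~` K])
        \/ (exists V : set X, [/\ open V, V !=set0 &
              S = [set A : CL | proj1_sig A `&` V !=set0]])].

HB.instance Definition _ :=
  isSubBaseTopological.Build CL fell_subbase id.

Lemma closed_compl_gdom (f : Gamma) : closed (~` gdom f).
Proof. by apply: open_closedC; have [h1 h2 _ _ _] := proj2_sig f. Qed.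

Lemma closed_compl_gim (f : Gamma) : closed (~` gim f).
Proof. by apply: open_closedC; have [h1 h2 _ _ _] := proj2_sig f. Qed.

Definition Dmap (f : Gamma) : CL := exist _ (~` gdom f) (@closed_compl_gdom f).
Definition Imap (f : Gamma) : CL := exist _ (~` gim f) (@closed_compl_gim f).

Definition hco_fwd (K V : set X) : set Gamma :=
  [set f | K `<=` gdom f /\
           forall x y, K x -> proj1_sig f x = Some y -> V y].
Definition hco_inv (K V : set X) : set Gamma :=
  [set f | K `<=` gim f /\
           forall x y, K y -> proj1_sig f x = Some y -> V x].

Definition hco_subbase : set (set Gamma) :=
  [set S | (exists K V, [/\ compact K, open V & S = hco_fwd K V])
        \/ (exists K V, [/\ compact K, open V & S = hco_inv K V])
        \/ (exists W : set CL, open W /\ S = Dmap @^-1` W)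
        \/ (exists W : set CL, open W /\ S = Imap @^-1` W)].

HB.instance Definition _ :=
  isSubBaseTopological.Build Gamma hco_subbase id.

End PartialHomeo.

From HB Require Import structures.
From mathcomp Require Import all_boot all_classical all_reals all_analysis.
From mathcomp Require Import finmap.

Set Implicit Arguments.
Unset Strict Implicit.
Unset Printing Implicit Defensive.

Local Open Scope classical_set_scope.

(* Regularity only has to be checked on subbasic neighbourhoods, each of which
   must contain the closure of a smaller neighbourhood.  The key tool is that in
   a locally compact Hausdorff space every compact K inside an open U lies in an
   open V with compact closure inside U.  It makes the Fell topology on CL(X)
   regular, and this pulls back along the continuous maps D and I.  For
   f in <K,V>, take such a V1 between K and dom f and such a V2 between f(K)
   and V: the closure of <cl V1, X> /\ <K, V2> stays inside <K,V>, and
   <K,V>^{-1} is the same argument on the inverse graph.  For T1, distinct f, g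
   either have different domains, separated through the T1 space CL(X), or
   differ at a common point x of their domains, f x = y <> y' = g x, and then
   <{x}, X \ {y'}> separates them. *)

Lemma compact_cover_compact (T : topologicalType) (A : set T) :
  compact A -> cover_compact A.
Proof.
move=> cA; have [[x0 _]|/set0P/negP/negPn/eqP ->] := pselect (A !=set0).
  (* [compact_cover] is stated for pointed spaces only. *)
  pose pT : ptopologicalType :=
    HB.pack_for ptopologicalType T (isPointed.Build T x0).
  have : @compact pT A by [].
  by rewrite compact_cover.
by move=> I D f _ _; exists fset0.
Qed.

Lemma closure_preimage (S T : topologicalType) (f : S -> T) (A : set T) :
  continuous f -> closure (f @^-1` A) `<=` f @^-1` closure A.
Proof.
by move=> cf x clx B /cf /clx [y [Ay By]]; exists (f y).
Qed.

Lemma regular_preimage (S T : topologicalType) (f : S -> T) x (W : set T) :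
  regular_space T -> continuous f -> nbhs (f x) W ->
  exists2 N, nbhs x N & closure N `<=` f @^-1` W.
Proof.
move=> rT cf /rT [W' W'fx clW'W].
exists (f @^-1` W'); first exact: cf.
by move=> y /(closure_preimage cf) /clW'W.
Qed.

Section locally_compact_hausdorff.
Context {X : topologicalType}.
Hypotheses (hX : hausdorff_space X) (lX : locally_compact [set: X]).

Lemma nbhs_compact_closure_sub (x : X) (U : set X) : open U -> U x ->
  exists2 B, nbhs x B & compact (closure B) /\ closure B `<=` U.
Proof.
move=> oU Ux; have [N Nx [cN _]] := @lX x I; rewrite withinET in Nx.
have UNx : nbhs x (U `&` N) by apply: filterI => //; exact: open_nbhs_nbhs.
have [B Bx clBUN] := compact_regular hX cN Nx UNx.
exists B => //; split; last by move=> y /clBUN [].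
apply: (subclosed_compact _ cN); first exact: closed_closure.
by move=> y /clBUN [].
Qed.

Lemma compact_open_interpose (K U : set X) : compact K -> open U -> K `<=` U ->
  exists2 V, open V /\ K `<=` V & compact (closure V) /\ closure V `<=` U.
Proof.
move=> cK oU KU.
have local x : exists Bx : set X,
    U x -> nbhs x Bx /\ compact (closure Bx) /\ closure Bx `<=` U.
  have [Ux|nUx] := pselect (U x); last by exists set0 => /nUx.
  by have [Bx ? ?] := nbhs_compact_closure_sub oU Ux; exists Bx.
have [B HB] := choice local.
have [D DK KD] := compact_cover_compact cK (fun x _ => @open_interior _ (B x))
  (fun x Kx => ex_intro2 _ _ x Kx (proj1 (HB x (KU x Kx)))).
have {}HB x : x \in D -> compact (closure (B x)) /\ closure (B x) `<=` U.
  by move=> /DK; rewrite in_setE => /KU /HB [].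
pose C := \bigcup_(x in [set` D]) closure (B x).
have cC : compact C.
  by rewrite /C bigcup_fset big_seq; apply: bigsetU_compact => x /HB [].
exists (\bigcup_(x in [set` D]) interior (B x)).
  by split=> //; apply: bigcup_open => x _; exact: open_interior.
have clC : closure (\bigcup_(x in [set` D]) interior (B x)) `<=` C.
  rewrite (closure_id C).1; last exact: compact_closed.
  apply: closureS => y [x Dx /interior_subset Bxy].
  by exists x => //; exact: subset_closure.
split; last by move=> y /clC [x /HB [_]]; apply.
by apply: (subclosed_compact _ cC) => //; exact: closed_closure.
Qed.

End locally_compact_hausdorff.

Definition subbase_topology (T : choiceType) (S : set_system T) : Type := T.
HB.instance Definition _ (T : choiceType) (S : set_system T) :=
  Choice.on (subbase_topology S).
HB.instance Definition _ (T : choiceType) (S : set_system T) :=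
  isSubBaseTopological.Build (subbase_topology S) S id.

Section subbase_topology_theory.
Context {T : choiceType} (S : set_system T).
Local Notation sT := (subbase_topology S).

Lemma subbase_open (s : set sT) : S s -> open s.
Proof.
move=> Ss; rewrite openE => x sx; exists s; split => //.
exists [set s]; first by move=> _ ->; exact: finI_from1.
by rewrite bigcup_set1.
Qed.

Lemma nbhs_subbase (x : sT) (A : set sT) : nbhs x A ->
  exists B, [/\ finI_from S id B, B x & B `<=` A].
Proof.
move=> [_ [[D SD <-] [B DB Bx] BA]].
by exists B; split => //; [exact: SD|move=> y By; apply: BA; exists B].
Qed.

Lemma subbase_regular :
    (forall (s : set sT) x, S s -> s x ->
      exists2 W, nbhs x W & closure W `<=` s) ->
  regular_space sT.
Proof.
move=> Sreg x A /nbhs_subbase [_ [[D DS <-] Dx DA]].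
have : Filter (filter_from (nbhs x) closure).
  apply: filter_from_filter; first by exists setT; exact: filterT.
  by move=> P Q Px Qx; exists (P `&` Q); [exact: filterI|exact: closureI].
move=> Freg; apply: (filterS DA); apply: filter_bigI => s Ds.
by have := DS s Ds; rewrite in_setE => Ss; exact: Sreg _ _ Ss (Dx s Ds).
Qed.

End subbase_topology_theory.

Section fell_topology.
Context {X : topologicalType}.
Implicit Types (K V W C : set X) (A B : CL X).

Definition fell_miss K : set (CL X) := [set A | proj1_sig A `<=` ~` K].
Definition fell_hit V : set (CL X) := [set A | proj1_sig A `&` V !=set0].

Lemma open_fell_miss K : compact K -> open (fell_miss K).
Proof.
by move=> cK; apply: (subbase_open (S := @fell_subbase X)); left; exists K.
Qed.

Lemma open_fell_hit V : open V -> V !=set0 -> open (fell_hit V).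
Proof.
by move=> oV V0; apply: (subbase_open (S := @fell_subbase X)); right; exists V.
Qed.

Lemma closure_fell_miss C W : open W -> W `<=` C ->
  closure (fell_miss C) `<=` fell_miss W.
Proof.
move=> oW WC A clA x Ax Wx.
have hitW : nbhs A (fell_hit W).
  by apply: open_nbhs_nbhs; split; [apply: open_fell_hit => //|]; exists x.
have [B [missC [y [By Wy]]]] := clA _ hitW.
exact: missC y By (WC y Wy).
Qed.

Lemma closure_fell_hit C V W : compact C -> W `<=` C -> C `<=` V ->
  closure (fell_hit W) `<=` fell_hit V.
Proof.
move=> cC WC CV A clA; apply: contrapT => nhitV.
have missC : nbhs A (fell_miss C).
  apply: open_nbhs_nbhs; split; first exact: open_fell_miss.
  by move=> x Ax Cx; apply: nhitV; exists x; split => //; exact: CV.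
have [B [[y [By Wy]] missCB]] := clA _ missC.
exact: missCB y By (WC y Wy).
Qed.

Lemma CL_accessible : accessible_space (CL X).
Proof.
move=> A B /eqP AB.
have [x ABx] : exists x, ~ (proj1_sig A x <-> proj1_sig B x).
  apply: contrapT => /forallNP ABe; apply: AB.
  case: A B ABe => [A cA] [B cB] /= ABe; apply: eq_exist.
  by apply/funext => x; apply/propext; apply: contrapT; exact: ABe.
have [Ax|nAx] := pselect (proj1_sig A x).
  have nBx : ~ proj1_sig B x by move=> Bx; apply: ABx.
  exists (fell_hit (~` proj1_sig B)); rewrite !in_setE; split.
  - by apply: open_fell_hit; [exact/closed_openC/(proj2_sig B)|exists x].
  - by exists x.
  - by case=> y [].
have Bx : proj1_sig B x by apply: contrapT => nBx; apply: ABx.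
exists (fell_miss [set x]); rewrite !in_setE; split.
- exact/open_fell_miss/compact_set1.
- by move=> y Ay yx; apply: nAx; rewrite -yx.
- by move=> /(_ x Bx); apply.
Qed.

Lemma CL_regular : hausdorff_space X -> locally_compact [set: X] ->
  regular_space (CL X).
Proof.
move=> hX lX; apply: (@subbase_regular _ (@fell_subbase X)) => s A.
case=> [[K [cK ->]]|[V [oV _ ->]]] /= AK.
- have oA : open (~` proj1_sig A) by exact/closed_openC/(proj2_sig A).
  have KA : K `<=` ~` proj1_sig A by move=> x Kx Ax; exact: AK x Ax Kx.
  have [W [oW KW] [cW WA]] := compact_open_interpose hX lX cK oA KA.
  exists (fell_miss (closure W)).
    apply: open_nbhs_nbhs; split; first exact: open_fell_miss.
    by move=> x Ax /WA.
  move=> B /(closure_fell_miss oW (@subset_closure _ W)) BW x Bx /KW.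
  exact: BW.
- have [x [Ax Vx]] := AK.
  have xV : [set x] `<=` V by move=> _ ->.
  have [W [oW xW] [cW WV]] :=
    compact_open_interpose hX lX (@compact_set1 _ x) oV xV.
  exists (fell_hit W); last exact: closure_fell_hit cW (@subset_closure _ W) WV.
  have Wx : W x by exact: xW.
  apply: open_nbhs_nbhs; split; first by apply: open_fell_hit => //; exists x.
  by exists x.
Qed.

End fell_topology.

Section gamma_hco.
Context {X : topologicalType}.
Implicit Types (b : bool) (f g : Gamma X) (K V W C : set X).

(* [b = true] reads the graph of [f] forwards and [b = false] backwards, so
   that [hco true K V] is <K,V> and [hco false K V] is <K,V>^{-1}. *)
Definition grel b f x y :=
  if b then proj1_sig f x = Some y else proj1_sig f y = Some x.
Definition gsrc b f : set X := if b then gdom f else gim f.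
Definition gcompl b f : CL X := if b then Dmap f else Imap f.
Definition hco b K V : set (Gamma X) :=
  [set g | K `<=` gsrc b g /\ forall x y, K x -> grel b g x y -> V y].

Lemma gsrcE b f x : gsrc b f x <-> exists y, grel b f x y.
Proof. by case: b. Qed.

Lemma gcomplE b f : proj1_sig (gcompl b f) = ~` gsrc b f.
Proof. by case: b. Qed.

Lemma grel_functional b f x y y' : grel b f x y -> grel b f x y' -> y = y'.
Proof.
have [_ _ finj _ _] := proj2_sig f.
by case: b => /=; [move=> -> []|exact: finj].
Qed.

Lemma open_gsrc b f : open (gsrc b f).
Proof. by have [? ? _ _ _] := proj2_sig f; case: b. Qed.

Lemma grel_continuous b f : exists2 phi : X -> X,
  {within gsrc b f, continuous phi} & forall x y, grel b f x y -> phi x = y.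
Proof.
have [_ _ _ fc [g [gf gc]]] := proj2_sig f.
case: b; last by exists g => // x y /gf.
by exists (fun x => odflt x (proj1_sig f x)) => // x y /= ->.
Qed.

Lemma hco_false K V : hco false K V = hco_inv K V.
Proof.
by apply/seteqP; split => g [KV gKV]; split => // x y Kx; apply: gKV.
Qed.

Lemma open_hco b K V : compact K -> open V -> open (hco b K V).
Proof.
move=> cK oV; apply: (@subbase_open _ (@hco_subbase X)).
case: b; first by left; exists K, V.
by right; left; exists K, V; rewrite hco_false.
Qed.

Lemma continuous_gcompl b : continuous (gcompl b : Gamma X -> CL X).
Proof.
apply/continuousP => W oW; apply: (@subbase_open _ (@hco_subbase X)).
by right; right; case: b; [left|right]; exists W.
Qed.

Lemma hco_setT b C : hco b C setT = gcompl b @^-1` fell_miss C.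
Proof.
apply/seteqP; split => g /=; rewrite /fell_miss /= gcomplE.
  by move=> [Cg _] x /[swap] /Cg.
by move=> gC; split => // x Cx; apply: contrapT => /gC.
Qed.

Lemma closure_hco_setT b C W : open W -> W `<=` C ->
  closure (hco b C setT) `<=` [set g | W `<=` gsrc b g].
Proof.
move=> oW WC g; rewrite hco_setT => /(closure_preimage (@continuous_gcompl b)).
move=> /(closure_fell_miss oW WC); rewrite /fell_miss /= gcomplE => gW x Wx.
by apply: contrapT => /gW.
Qed.

Lemma closure_hco b K V : closure (hco b K V) `<=`
  [set g | forall x y, K x -> grel b g x y -> closure V y].
Proof.
move=> g clg x y Kx gxy B; rewrite nbhsE => -[B' [oB' B'y] B'B].
have gxB' : nbhs g (hco b [set x] B').
  apply: open_nbhs_nbhs; split; first exact/open_hco/oB'/compact_set1.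
  split; first by move=> _ ->; apply/gsrcE; exists y.
  by move=> _ y' -> gxy'; rewrite -(grel_functional gxy gxy').
have [h [[Kh hKV] [_ hxB']]] := clg _ gxB'.
have /gsrcE [y' hxy'] := Kh x Kx.
by exists y'; split; [exact: hKV hxy'|exact/B'B/(hxB' x)].
Qed.

End gamma_hco.

Lemma Gamma_accessible (X : topologicalType) :
  accessible_space X -> accessible_space (Gamma X).
Proof.
move=> aX f g /eqP fg.
have [Dfg|/eqP/CL_accessible [W [oW fW gW]]] :=
    pselect (Dmap f = Dmap g); last first.
  exists (gcompl true @^-1` W); rewrite !in_setE in fW gW *; split => //.
  exact: (continuousP _).1 (@continuous_gcompl X true) W oW.
have dom_fg : gdom f = gdom g.
  rewrite -[gdom f]setCK -[gdom g]setCK; congr setC.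
  by have /= := congr1 (@proj1_sig _ _) Dfg.
have [x fgx] : exists x, proj1_sig f x <> proj1_sig g x.
  apply: contrapT => /forallNP fge; apply: fg.
  case: f g fge {Dfg dom_fg} => [f pf] [g pg] /= fge; apply: eq_exist.
  by apply/funext => x; apply: contrapT; exact: fge.
have [y fxy] : gdom f x.
  case ef : (proj1_sig f x) fgx => [y|] fgx; first by exists y.
  case eg : (proj1_sig g x) fgx => [y'|] // _.
  have : gdom f x by rewrite dom_fg; exists y'.
  by case=> y; rewrite ef.
have [y' gxy'] : gdom g x by rewrite -dom_fg; exists y.
have yy' : y <> y' by move=> e; apply: fgx; rewrite fxy gxy' e.
exists (hco true [set x] (~` [set y'])); rewrite !in_setE; split.
- apply: open_hco; first exact: compact_set1.
  exact/closed_openC/accessible_closed_set1.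
- split; first by move=> _ ->; exists y.
  by move=> _ z -> /=; rewrite fxy => -[<-].
- by case=> _ /(_ x y' erefl gxy'); apply.
Qed.

Section gamma_regular.
Context {X : topologicalType}.
Hypotheses (hX : hausdorff_space X) (lX : locally_compact [set: X]).

Lemma hco_regular b (K V : set X) (f : Gamma X) :
  compact K -> open V -> hco b K V f ->
  exists2 N, nbhs f N & closure N `<=` hco b K V.
Proof.
move=> cK oV [Kf fKV].
have [V1 [oV1 KV1] [cV1 V1f]] :=
  compact_open_interpose hX lX cK (open_gsrc b f) Kf.
have [phi phic phiE] := grel_continuous b f.
have phiKV : phi @` K `<=` V.
  move=> _ [x Kx <-]; have /gsrcE [y fxy] := Kf x Kx.
  by rewrite (phiE _ _ fxy); exact: fKV fxy.
have cphiK : compact (phi @` K).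
  by apply: continuous_compact cK; exact: continuous_subspaceW phic.
have [V2 [oV2 phiKV2] [_ V2V]] := compact_open_interpose hX lX cphiK oV phiKV.
exists (hco b (closure V1) setT `&` hco b K V2).
  apply: open_nbhs_nbhs; split.
    by apply: openI; apply: open_hco => //; exact: openT.
  split; split => // x y Kx fxy.
  by apply: phiKV2; exists x => //; exact: phiE.
move=> g /closureI [/(closure_hco_setT oV1 (@subset_closure _ V1)) V1g].
move=> /closure_hco gV2; split; first by move=> x /KV1 /V1g.
by move=> x y Kx gxy; exact/V2V/(gV2 x y Kx gxy).
Qed.

Lemma gcompl_regular b (W : set (CL X)) (f : Gamma X) :
  open W -> W (gcompl b f) ->
  exists2 N, nbhs f N & closure N `<=` gcompl b @^-1` W.
Proof.
move=> oW Wf; apply: (regular_preimage (CL_regular hX lX)).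
  exact: continuous_gcompl.
exact: open_nbhs_nbhs.
Qed.

Lemma Gamma_regular : regular_space (Gamma X).
Proof.
apply: (@subbase_regular _ (@hco_subbase X)) => s f.
case=> [[K [V [cK oV ->]]]|[[K [V [cK oV ->]]]|[[W [oW ->]]|[W [oW ->]]]]] sf.
- exact: (@hco_regular true _ _ _ cK oV sf).
- by rewrite -hco_false in sf *; exact: (@hco_regular false _ _ _ cK oV sf).
- exact: (@gcompl_regular true _ _ oW sf).
- exact: (@gcompl_regular false _ _ oW sf).
Qed.

End gamma_regular.

Theorem mainTheorem2 (X : topologicalType) :
  hausdorff_space X -> locally_compact [set: X] ->
  accessible_space (Gamma X) /\ regular_space (Gamma X).
Proof.
move=> hX lX; split; first exact/Gamma_accessible/hausdorff_accessible.
exact: Gamma_regular.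
Qed.
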